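(* Let $X\times G\xrightarrow{\alpha}X$ be a Bourbaki-proper continuous right action of a locally compact Hausdorff group on a Hausdorff space, let $F\subseteq X$ be closed and let $H\trianglelefteq G$ be a closed normal subgroup, with quotient map $\pi\colon X\to X/H$. If $\alpha$ is $F$-proper, then $\pi(F)$ is closed in $X/H$ and the induced action of $G/H$ on $X/H$ is $\pi(F)$-proper.
   Context: For $A,B\subseteq X$ set $\langle A:B\rangle_\alpha:=\{g\in G: Bg\cap A\neq\emptyset\}$ and write $A\perp B$ if it is relatively compact in $G$. The action is Bourbaki-proper if for all $x,x'\in X$ there are neighborhoods $V_x\ni x$, $V_{x'}\ni x'$ with $V_{x'}\perp V_x$. For closed $F$, the action is $F$-proper if for every $x\in X$ there are neighborhoods $V_x\ni x$ and $V_F\supseteq F$ with $V_F\perp V_x$ (analogously for the induced action on $X/H$). *)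

From HB Require Import structures.
From mathcomp Require Import all_boot all_algebra generic_quotient.
From mathcomp Require Import all_classical topology.

Set Implicit Arguments.
Unset Strict Implicit.
Unset Printing Implicit Defensive.

Local Open Scope classical_set_scope.
Local Open Scope quotient_scope.

Definition relcompact (T : topologicalType) (A : set T) := compact (closure A).

Definition transporter (T K : Type) (act : T -> K -> T) (A B : set T) : set K :=
  [set g | exists2 b, B b & A (act b g)].

Definition perp (T : Type) (K : topologicalType) (act : T -> K -> T)
  (A B : set T) := relcompact (transporter act A B).

Definition nbhs_of_set (T : topologicalType) (F V : set T) :=
  exists2 U, open U & F `<=` U /\ U `<=` V.

Definition bourbaki_proper (T K : topologicalType) (act : T -> K -> T) :=
  forall x x' : T, exists Vx Vx',
    [/\ nbhs x Vx, nbhs x' Vx' & perp act Vx' Vx].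

Definition F_proper (T K : topologicalType) (act : T -> K -> T) (F : set T) :=
  forall x : T, exists Vx VF,
    [/\ nbhs x Vx, nbhs_of_set F VF & perp act VF Vx].

Definition quot_space (T : topologicalType) (e : equiv_rel T) :=
  quotient_topology {eq_quot e}.

(** The induced action of G/H on X/H:  pi(x) . q(g) := pi(x g). *)
Definition induced_action (X G : topologicalType) (eX : equiv_rel X)
  (eG : equiv_rel G) (act : X -> G -> X)
  (u : quot_space eX) (v : quot_space eG) : quot_space eX :=
  \pi_(quot_space eX) (act (repr u) (repr v)).

From HB Require Import structures.
From mathcomp Require Import all_boot all_algebra generic_quotient.
From mathcomp Require Import all_classical topology.

Set Implicit Arguments.
Unset Strict Implicit.
Unset Printing Implicit Defensive.

Local Open Scope classical_set_scope.
Local Open Scope quotient_scope.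

(* For x in the closure of F H, F-properness at x confines the h in H with
   x' h in F, for x' near x, to a compact set; a cluster point z of these h
   lies in H and satisfies x z in F by continuity, so F H is closed.  As
   F H is the saturation of F and the quotient map pi is open, pi F is closed
   and pi maps neighbourhoods of x and of F to neighbourhoods of pi x and pi F.
   By normality of H, the transporter of these images lies in the image in G/H
   of the compact closure K of <VF : Vx>; that image is compact, and closed
   because K H is closed by the same cluster argument, now with K playing the
   role of H for the action (g, k) |-> k^-1 g of G on itself. *)

Lemma compact_cluster_from_nbhs (Y Z : topologicalType) (x : Y)
    (S : set Y -> set Z) (C : set Z) :
  compact C -> {homo S : W1 W2 / W1 `<=` W2} ->
  (forall W, nbhs x W -> S W !=set0) -> (exists2 W, nbhs x W & S W `<=` C) ->
  exists2 z, C z & forall W B, nbhs x W -> nbhs z B -> S W `&` B !=set0.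
Proof.
move=> cC Smono Sne [W0 W0x SW0C].
have FS : ProperFilter (filter_from (nbhs x) S).
  apply: filter_from_proper Sne; apply: filter_from_filter.
    by exists setT; exact: filterT.
  move=> W1 W2 W1x W2x; exists (W1 `&` W2); first exact: filterI.
  by rewrite subsetI; split; apply: Smono => ? [].
have [|z [Cz clz]] := cC _ FS; first by exists W0.
by exists z => // W B Wx Bz; apply: clz => //; exists W.
Qed.

Lemma closed_act_saturation (T K : topologicalType) (act : T -> K -> T)
    (A : set T) (H : set K) :
  continuous (fun p : T * K => act p.1 p.2) -> closed A -> closed H ->
  (forall x : T, exists2 W, nbhs x W &
     exists2 C, compact C & H `&` transporter act A W `<=` C) ->
  closed [set x | exists2 h, H h & A (act x h)].
Proof.
move=> act_cont A_closed H_closed loc x clx.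
have [W0 W0x [C cC W0C]] := loc x.
have [||z _ clz] := @compact_cluster_from_nbhs _ _ x
    (fun W => H `&` transporter act A W) C cC _ _ (ex_intro2 _ _ W0 W0x W0C).
- by move=> W1 W2 W12 h [Hh [w /W12 W2w Aw]]; split=> //; exists w.
- move=> W Wx; have [y [[h Hh Ayh] Wy]] := clx W Wx.
  by exists h; split=> //; exists y.
exists z.
  by apply: H_closed => B Bz; have [h [[Hh _] Bh]] := clz _ _ filterT Bz; exists h.
apply: A_closed => N /(act_cont (x, z)) [[W B] /= [Wx Bz] WB].
have [h [[_ [y Wy Ayh]] Bh]] := clz W B Wx Bz.
by exists (act y h); split=> //; apply: (WB (y, h)).
Qed.

Lemma quot_space_eqP (T : topologicalType) (e : equiv_rel T) (a b : T) :
  \pi_(quot_space e) a = \pi_(quot_space e) b :> quot_space e <-> e a b.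
Proof. by split=> /eqmodP. Qed.

Lemma quot_space_closed (T : topologicalType) (e : equiv_rel T)
    (D : set (quot_space e)) :
  closed ((\pi_(quot_space e) : T -> quot_space e) @^-1` D) -> closed D.
Proof.
move=> cD; rewrite -openC.
change (open ((\pi_(quot_space e) : T -> quot_space e) @^-1` (~` D))).
by rewrite preimage_setC openC.
Qed.

Section OrbitQuotient.
Variables (X G : topologicalType) (mul : G -> G -> G) (inv : G -> G) (one : G).
Hypothesis mulgV : forall a, mul a (inv a) = one.
Variable alpha : X -> G -> X.
Hypothesis alpha_cont : continuous (fun p : X * G => alpha p.1 p.2).
Hypothesis alpha1 : forall x, alpha x one = x.
Hypothesis alphaM : forall x g h, alpha (alpha x g) h = alpha x (mul g h).
Variable H : set G.
Hypothesis H_closed : closed H.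
Hypothesis HV : forall a, H a -> H (inv a).
Variable e : equiv_rel X.
Hypothesis e_orbit : forall x y, e x y <-> exists2 h, H h & y = alpha x h.

Local Notation pi := (\pi_(quot_space e) : X -> quot_space e).

Lemma preimage_pi_image (A : set X) :
  pi @^-1` (pi @` A) = [set x | exists2 h, H h & A (alpha x h)].
Proof.
apply/seteqP; split=> x /=.
- move=> [a Aa /quot_space_eqP /e_orbit [h Hh ->]]; exists (inv h); first exact: HV.
  by rewrite alphaM mulgV alpha1.
- move=> [h Hh Axh]; exists (alpha x h) => //.
  apply/quot_space_eqP/e_orbit; exists (inv h); first exact: HV.
  by rewrite alphaM mulgV alpha1.
Qed.

Lemma continuous_act_r (g : G) : continuous (alpha ^~ g).
Proof.
move=> x; apply: (@continuous2_cvg _ _ _ _ _ _ id (fun=> g) alpha x g).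
- exact: alpha_cont (x, g).
- exact: cvg_id.
- exact: cvg_cst.
Qed.

Lemma open_pi_image (O : set X) : open O -> open (pi @` O).
Proof.
move=> oO; change (open (pi @^-1` (pi @` O))); rewrite preimage_pi_image.
have -> : [set x | exists2 h, H h & O (alpha x h)] =
    \bigcup_(h in H) (alpha ^~ h @^-1` O).
  by apply/seteqP; split=> x [h]; exists h.
by apply: bigcup_open => h _; apply: (continuousP _).1 (@continuous_act_r h) O oO.
Qed.

Lemma nbhs_pi_image (x : X) (V : set X) : nbhs x V -> nbhs (pi x) (pi @` V).
Proof.
rewrite !nbhsE => -[O [oO Ox] OV]; exists (pi @` O); last exact: image_subset.
by split; [exact: open_pi_image | exists x].
Qed.

Lemma nbhs_of_set_pi_image (A V : set X) :
  nbhs_of_set A V -> nbhs_of_set (pi @` A) (pi @` V).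
Proof.
move=> [U oU [AU UV]]; exists (pi @` U); first exact: open_pi_image.
by split; apply: image_subset.
Qed.

Lemma closed_pi_image_F_proper (F : set X) :
  closed F -> F_proper alpha F -> closed (pi @` F).
Proof.
move=> F_closed Fprop; apply: quot_space_closed; rewrite preimage_pi_image.
apply: closed_act_saturation => // x.
have [Vx [VF [Vxx [U _ [FU UVF]] VF_perp_Vx]]] := Fprop x.
exists Vx => //; exists (closure (transporter alpha VF Vx)) => // h [_ [y Vy Fyh]].
by apply: subset_closure; exists y => //; apply/UVF/FU.
Qed.

End OrbitQuotient.

Section InducedAction.
Variables (X G : topologicalType) (mul : G -> G -> G) (inv : G -> G) (one : G).
Hypothesis mulA : forall a b c, mul a (mul b c) = mul (mul a b) c.
Hypothesis mul1g : forall a, mul one a = a.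
Hypothesis mulg1 : forall a, mul a one = a.
Hypothesis mulVg : forall a, mul (inv a) a = one.
Hypothesis mulgV : forall a, mul a (inv a) = one.
Hypothesis mul_cont : continuous (fun p : G * G => mul p.1 p.2).
Hypothesis inv_cont : continuous inv.
Hypothesis G_haus : hausdorff_space G.
Variable alpha : X -> G -> X.
Hypothesis alphaM : forall x g h, alpha (alpha x g) h = alpha x (mul g h).
Variable H : set G.
Hypothesis H_closed : closed H.
Hypothesis HM : forall a b, H a -> H b -> H (mul a b).
Hypothesis HV : forall a, H a -> H (inv a).
Hypothesis H_normal : forall g h, H h -> H (mul (mul g h) (inv g)).
Variable eX : equiv_rel X.
Hypothesis eX_orbit : forall x y, eX x y <-> exists2 h, H h & y = alpha x h.
Variable eG : equiv_rel G.
Hypothesis eG_coset : forall g g', eG g g' <-> exists2 h, H h & g' = mul g h.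

Local Notation piX := (\pi_(quot_space eX) : X -> quot_space eX).
Local Notation piG := (\pi_(quot_space eG) : G -> quot_space eG).

Lemma continuous_left_div : continuous (fun p : G * G => mul (inv p.2) p.1).
Proof.
move=> [g k]; apply: (@continuous2_cvg _ _ _ _ _ _ (inv \o snd) fst mul).
- exact: mul_cont (inv k, g).
- by apply: continuous_comp; [exact: cvg_snd | exact: inv_cont].
- exact: cvg_fst.
Qed.

Lemma closed_piG_image (K : set G) : compact K -> closed (piG @` K).
Proof.
move=> cK; apply: quot_space_closed.
have mulgA x g h : mul (mul x g) h = mul x (mul g h) by rewrite mulA.
rewrite (@preimage_pi_image _ _ _ _ _ mulgV _ mulg1 mulgA _ HV _ eG_coset).
have -> : [set g | exists2 h, H h & K (mul g h)] =
    [set g | exists2 k, K k & H (mul (inv k) g)].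
  apply/seteqP; split=> g [].
  - move=> h Hh Kgh; exists (mul g h) => //.
    rewrite {2}(_ : g = mul (mul g h) (inv h)); last by rewrite -mulA mulgV mulg1.
    by rewrite mulA mulVg mul1g; exact: HV.
  - move=> k Kk Hkg; exists (inv (mul (inv k) g)); first exact: HV.
    rewrite {1}(_ : g = mul k (mul (inv k) g)); last by rewrite mulA mulgV mul1g.
    by rewrite -mulA mulgV mulg1.
apply: closed_act_saturation continuous_left_div H_closed _ _.
  exact: compact_closed G_haus cK.
by move=> g; exists setT; [exact: filterT | exists K => // k []].
Qed.

Lemma transporter_induced_sub (A B : set X) :
  transporter (@induced_action X G eX eG alpha) (piX @` A) (piX @` B) `<=`
  piG @` transporter alpha A B.
Proof.
move=> q [_ [y By <-] [v Av vq]]; rewrite /induced_action in vq.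
have [h Hh yh] : exists2 h, H h & repr (piX y) = alpha y h.
  by apply/eX_orbit/quot_space_eqP; rewrite reprK.
have [h' Hh' vE] : exists2 h', H h' & v = alpha (alpha (alpha y h) (repr q)) h'.
  by apply/eX_orbit/quot_space_eqP; rewrite -yh vq.
exists (mul (mul h (repr q)) h').
  by exists y => //; rewrite -!alphaM -vE.
rewrite -[RHS](reprK q); apply/quot_space_eqP; rewrite equiv_sym; apply/eG_coset.
set g := repr q.
have Hconj : H (mul (mul (inv g) h) g).
  have invgK : inv (inv g) = g by rewrite -[LHS]mulg1 -(mulVg g) mulA mulVg mul1g.
  by have := @H_normal (inv g) h Hh; rewrite invgK.
exists (mul (mul (mul (inv g) h) g) h'); first exact: HM.
by rewrite !mulA mulgV mul1g.
Qed.

Lemma perp_induced (A B : set X) :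
  perp alpha A B -> perp (@induced_action X G eX eG alpha) (piX @` A) (piX @` B).
Proof.
rewrite /perp /relcompact; set K := closure _ => cK.
have cpiK : compact (piG @` K).
  by apply: continuous_compact cK; apply: continuous_subspaceT; exact: pi_continuous.
apply: (subclosed_compact _ cpiK); first exact: closed_closure.
rewrite [X in _ `<=` X](closure_id _).1; last exact: closed_piG_image.
apply: closureS; apply: subset_trans (@transporter_induced_sub A B) _.
exact/image_subset/subset_closure.
Qed.

End InducedAction.

Theorem lemma2p10
  (X G : topologicalType)
  (mul : G -> G -> G) (inv : G -> G) (one : G)
  (mulA : forall a b c, mul a (mul b c) = mul (mul a b) c)
  (mul1g : forall a, mul one a = a)
  (mulg1 : forall a, mul a one = a)
  (mulVg : forall a, mul (inv a) a = one)
  (mulgV : forall a, mul a (inv a) = one)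
  (mul_cont : continuous (fun p : G * G => mul p.1 p.2))
  (inv_cont : continuous inv)
  (G_lc : locally_compact [set: G])
  (G_haus : hausdorff_space G)
  (X_haus : hausdorff_space X)
  (alpha : X -> G -> X)
  (alpha_cont : continuous (fun p : X * G => alpha p.1 p.2))
  (alpha1 : forall x, alpha x one = x)
  (alphaM : forall x g h, alpha (alpha x g) h = alpha x (mul g h))
  (alpha_bproper : bourbaki_proper alpha)
  (F : set X) (F_closed : closed F)
  (H : set G) (H_closed : closed H)
  (H1 : H one)
  (HM : forall a b, H a -> H b -> H (mul a b))
  (HV : forall a, H a -> H (inv a))
  (H_normal : forall g h, H h -> H (mul (mul g h) (inv g)))
  (eX : equiv_rel X)
  (eX_orbit : forall x y, eX x y <-> exists2 h, H h & y = alpha x h)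
  (eG : equiv_rel G)
  (eG_coset : forall g g', eG g g' <-> exists2 h, H h & g' = mul g h)
  (alpha_Fproper : F_proper alpha F) :
  closed ((\pi_(quot_space eX) : X -> quot_space eX) @` F) /\
  F_proper (@induced_action X G eX eG alpha)
    ((\pi_(quot_space eX) : X -> quot_space eX) @` F).
Proof.
split; first exact: (closed_pi_image_F_proper mulgV alpha_cont alpha1 alphaM
  H_closed HV eX_orbit F_closed alpha_Fproper).
move=> u; have [Vx [VF [Vx_nbhs VF_nbhs VF_perp_Vx]]] := alpha_Fproper (repr u).
exists (\pi_(quot_space eX) @` Vx), (\pi_(quot_space eX) @` VF); split.
- rewrite -[u]reprK.
  exact: (nbhs_pi_image mulgV alpha_cont alpha1 alphaM HV eX_orbit).
- exact: (nbhs_of_set_pi_image mulgV alpha_cont alpha1 alphaM HV eX_orbit).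
- exact: (perp_induced mulA mul1g mulg1 mulVg mulgV mul_cont inv_cont G_haus
    alphaM H_closed HM HV H_normal eX_orbit eG_coset).
Qed.
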